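(* (a) In Case I, there exist $\delta,\beta_0,c_2>0$ such that, setting $B_{l,\beta}=\,]-2\beta^{1/\alpha},-\beta^{1/\alpha}[\times]-\delta,\delta[$, for every $0<\beta\le\beta_0$ one has $\frac{\partial h_0}{\partial x_1}\le -c_2\beta^{1-1/\alpha}$ on $B_{l,\beta}$. (b) In Case II, there exist $\theta_0\in\,]0,\pi/2[$ and $c_2,\beta_0>0$ such that, setting $B_{p,\beta}=\{(x_1,x_2)\in\mathbb{R}^2:\ \beta^{1/\alpha}\le\rho\le2\beta^{1/\alpha},\ \pi-\theta_0\le\theta\le\pi+\theta_0\}$ (where $(\rho,\theta)$ are polar coordinates of $(x_1,x_2)$), for every $0<\beta\le\beta_0$ one has $\frac{\partial h_0}{\partial x_1}\le-c_2\beta^{1-1/\alpha}$ on $B_{p,\beta}$.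
   Context: Let $\Omega\subset\mathbb{R}^2$ be a bounded open set with regular boundary, $0\in\Omega$, and $h_0\in C^1(\bar\Omega)$, $h_0\ge0$, $\min_\Omega h_0=h_0(0)=0$. Case I (line contact): $h_0(0,x_2)=0$ whenever $(0,x_2)\in\Omega$, $h_0(x_1,x_2)>0$ for $x_1\neq0$, and there exist $\alpha\ge1$, a neighborhood $W$ of $0$ and a regular function $h_1>0$ on $\bar W$ with $h_0(x_1,x_2)=|x_1|^\alpha h_1(x_1,x_2)$ on $W$. Case II (point contact): $h_0(x)>0$ for $x\in\Omega\setminus\{0\}$, and there exist $\alpha\ge1$, a neighborhood $W$ of $0$ and a regular $h_1>0$ on $\bar W$ with $h_0(x)=|x|^\alpha h_1(x)$ on $W$. *)

From Stdlib Require Import Reals.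
From Coquelicot Require Import Coquelicot.
Open Scope R_scope.

Definition dist2 (a b c d : R) : R := sqrt ((a - c) ^ 2 + (b - d) ^ 2).

Definition norm2 (x1 x2 : R) : R := sqrt (x1 ^ 2 + x2 ^ 2).

Definition open2 (S : R -> R -> Prop) : Prop :=
  forall x y, S x y -> exists r, 0 < r /\ forall a b, dist2 x y a b < r -> S a b.

Definition bounded2 (S : R -> R -> Prop) : Prop :=
  exists M, forall x y, S x y -> norm2 x y <= M.

Definition closure2 (S : R -> R -> Prop) (x y : R) : Prop :=
  forall eps, 0 < eps -> exists a b, S a b /\ dist2 x y a b < eps.

Definition cont_on2 (T : R -> R -> Prop) (g : R -> R -> R) : Prop :=
  forall x y, T x y -> forall eps, 0 < eps -> exists del, 0 < del /\
    forall a b, T a b -> dist2 x y a b < del -> Rabs (g a b - g x y) < eps.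

Definition pd1 (f : R -> R -> R) (x y : R) : R := Derive (fun t => f t y) x.
Definition pd2 (f : R -> R -> R) (x y : R) : R := Derive (fun t => f x t) y.

(* f ∈ C^1(S̄) for an open set S: f is continuous on S̄, has partial
   derivatives on S, and these partial derivatives extend continuously to S̄. *)
Definition C1_closure (S : R -> R -> Prop) (f : R -> R -> R) : Prop :=
  cont_on2 (closure2 S) f /\
  (forall x y, S x y -> ex_derive (fun t => f t y) x /\ ex_derive (fun t => f x t) y) /\
  exists g1 g2 : R -> R -> R,
    cont_on2 (closure2 S) g1 /\ cont_on2 (closure2 S) g2 /\
    (forall x y, S x y -> pd1 f x y = g1 x y /\ pd2 f x y = g2 x y).

(* r ^ a for r >= 0 and real a > 0, with the convention 0 ^ a = 0
   (Stdlib's Rpower 0 a is exp (a * ln 0) = 1, which is not wanted). *)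
Definition rpow (r a : R) : R := if Rle_dec r 0 then 0 else Rpower r a.

Definition standing (Om : R -> R -> Prop) (h0 : R -> R -> R) : Prop :=
  open2 Om /\ bounded2 Om /\ Om 0 0 /\ C1_closure Om h0 /\
  (forall x y, closure2 Om x y -> 0 <= h0 x y) /\ h0 0 0 = 0.

Definition caseI (Om : R -> R -> Prop) (h0 : R -> R -> R) (alpha : R) : Prop :=
  (forall x2, Om 0 x2 -> h0 0 x2 = 0) /\
  (forall x1 x2, Om x1 x2 -> x1 <> 0 -> 0 < h0 x1 x2) /\
  1 <= alpha /\
  exists (W : R -> R -> Prop) (h1 : R -> R -> R),
    open2 W /\ W 0 0 /\ C1_closure W h1 /\
    (forall x1 x2, closure2 W x1 x2 -> 0 < h1 x1 x2) /\
    (forall x1 x2, W x1 x2 -> Om x1 x2 -> h0 x1 x2 = rpow (Rabs x1) alpha * h1 x1 x2).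

Definition caseII (Om : R -> R -> Prop) (h0 : R -> R -> R) (alpha : R) : Prop :=
  (forall x1 x2, Om x1 x2 -> (x1, x2) <> (0, 0) -> 0 < h0 x1 x2) /\
  1 <= alpha /\
  exists (W : R -> R -> Prop) (h1 : R -> R -> R),
    open2 W /\ W 0 0 /\ C1_closure W h1 /\
    (forall x1 x2, closure2 W x1 x2 -> 0 < h1 x1 x2) /\
    (forall x1 x2, W x1 x2 -> Om x1 x2 -> h0 x1 x2 = rpow (norm2 x1 x2) alpha * h1 x1 x2).

Definition B_l (alpha delta beta : R) (x1 x2 : R) : Prop :=
  - 2 * rpow beta (1 / alpha) < x1 < - rpow beta (1 / alpha) /\ - delta < x2 < delta.

Definition B_p (alpha theta0 beta : R) (x1 x2 : R) : Prop :=
  let rho := norm2 x1 x2 in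
  rpow beta (1 / alpha) <= rho <= 2 * rpow beta (1 / alpha) /\
  exists theta, PI - theta0 <= theta <= PI + theta0 /\
    x1 = rho * cos theta /\ x2 = rho * sin theta.

From Stdlib Require Import Reals Lra Psatz.
From Coquelicot Require Import Coquelicot.
Open Scope R_scope.

(* Near the origin write h0 = F h1 with F(x) = |x1|^alpha (Case I) or |x|^alpha (Case II),
   h1 >= m > 0 and |d1 h1| <= M.  On the sets B the radius rho = |x1| resp. |x| is
   comparable to beta^(1/alpha) and d1 F = alpha rho^(alpha-1) c with c <= -1/2, so
   d1 h0 = d1 F h1 + F d1 h1 <= rho^(alpha-1) (-alpha m / 2 + rho M) <= -(m/4) rho^(alpha-1)
   once rho M <= m/4; finally rho^(alpha-1) >= beta^(1 - 1/alpha). *)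

Lemma Rpower_gt0 x y : 0 < Rpower x y.
Proof. apply exp_pos. Qed.

Lemma rpow_Rpower r a : 0 < r -> rpow r a = Rpower r a.
Proof. intros Hr; unfold rpow; destruct (Rle_dec r 0); [lra | reflexivity]. Qed.

Lemma Rpower_inv_le a s beta : 1 <= a -> 0 < s -> 0 < beta <= Rpower s a ->
  Rpower beta (1 / a) <= s.
Proof.
  intros Ha Hs Hb.
  apply Rle_trans with (Rpower (Rpower s a) (1 / a)).
  - apply Rle_Rpower_l; [apply Rlt_le, Rdiv_lt_0_compat|]; lra.
  - rewrite Rpower_mult; replace (a * (1 / a)) with 1 by (field; lra).
    rewrite Rpower_1; lra.
Qed.

Lemma Rpower_le_pred_exponent a beta rho : 1 <= a -> 0 < beta ->
  Rpower beta (1 / a) <= rho -> Rpower beta (1 - 1 / a) <= Rpower rho (a - 1).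
Proof.
  intros Ha Hb Hr.
  replace (1 - 1 / a) with (1 / a * (a - 1)) by (field; lra).
  rewrite <- Rpower_mult; apply Rle_Rpower_l; [lra|].
  split; [apply Rpower_gt0 | exact Hr].
Qed.

Lemma Rpower_pred_mul rho a : 0 < rho -> Rpower rho a = Rpower rho (a - 1) * rho.
Proof.
  intros Hr; rewrite <- (Rpower_1 rho) at 3 by exact Hr.
  rewrite <- Rpower_plus; f_equal; ring.
Qed.

Lemma is_derive_Rpower x a : 0 < x ->
  is_derive (fun u => Rpower u a) x (a * Rpower x (a - 1)).
Proof. intros Hx; apply is_derive_Reals, derivable_pt_lim_power, Hx. Qed.

Lemma is_derive_Rpower_opp x a : x < 0 ->
  is_derive (fun t => Rpower (- t) a) x (- (a * Rpower (- x) (a - 1))).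
Proof.
  intros Hx.
  replace (- (a * Rpower (- x) (a - 1))) with (-1 * (a * Rpower (- x) (a - 1))) by ring.
  apply (is_derive_comp (fun u => Rpower u a) Ropp).
  - apply is_derive_Rpower; lra.
  - auto_derive; [exact I | ring].
Qed.

Lemma norm2_pos x1 x2 : x1 <> 0 -> 0 < norm2 x1 x2.
Proof.
  intros Hx; apply sqrt_lt_R0.
  assert (0 < x1 * x1) by (apply Rsqr_pos_lt, Hx); nra.
Qed.

Lemma is_derive_Rpower_norm2 x1 x2 a : x1 <> 0 ->
  is_derive (fun t => Rpower (norm2 t x2) a) x1
    (a * Rpower (norm2 x1 x2) (a - 1) * (x1 / norm2 x1 x2)).
Proof.
  intros Hx.
  assert (Hq : 0 < x1 ^ 2 + x2 ^ 2) by (assert (0 < x1 * x1) by (apply Rsqr_pos_lt; auto); nra).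
  pose proof (norm2_pos x1 x2 Hx) as Hn.
  replace (a * Rpower (norm2 x1 x2) (a - 1) * (x1 / norm2 x1 x2))
    with (x1 / norm2 x1 x2 * (a * Rpower (norm2 x1 x2) (a - 1))) by ring.
  apply (is_derive_comp (fun u => Rpower u a) (fun t => norm2 t x2)).
  - apply is_derive_Rpower, Hn.
  - replace (x1 / norm2 x1 x2) with (2 * x1 / (2 * sqrt (x1 ^ 2 + x2 ^ 2)))
      by (unfold norm2 in Hn |- *; field; lra).
    unfold norm2; apply (is_derive_sqrt (fun t => t ^ 2 + x2 ^ 2)).
    + auto_derive; [exact I | ring].
    + exact Hq.
Qed.

Lemma pd1_mul_local (h0 h1 : R -> R -> R) (F : R -> R) x1 x2 dF :
  locally x1 (fun t => F t * h1 t x2 = h0 t x2) -> is_derive F x1 dF ->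
  ex_derive (fun t => h1 t x2) x1 ->
  pd1 h0 x1 x2 = dF * h1 x1 x2 + F x1 * pd1 h1 x1 x2.
Proof.
  intros Hloc HF [d Hd].
  replace (pd1 h1 x1 x2) with d by (symmetry; apply is_derive_unique, Hd).
  apply is_derive_unique, (is_derive_ext_loc (fun t => F t * h1 t x2)); [exact Hloc|].
  apply (is_derive_mult F (fun t => h1 t x2)); [exact HF | exact Hd | intros; apply Rmult_comm].
Qed.

Lemma factor_derivative_le alpha beta rho c h g m M :
  1 <= alpha -> 0 < beta -> Rpower beta (1 / alpha) <= rho ->
  c <= - (1 / 2) -> 0 < m -> m <= h -> Rabs g <= M -> rho * M <= m / 4 ->
  alpha * Rpower rho (alpha - 1) * c * h + Rpower rho alpha * g
    <= - (m / 4) * Rpower beta (1 - 1 / alpha).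
Proof.
  intros Ha Hb Hr Hc Hm Hh Hg HM.
  assert (Hrho : 0 < rho) by (pose proof (Rpower_gt0 beta (1 / alpha)); lra).
  pose proof (Rpower_le_pred_exponent alpha beta rho Ha Hb Hr) as HPQ.
  rewrite (Rpower_pred_mul rho alpha Hrho).
  set (P := Rpower rho (alpha - 1)) in *.
  assert (HP : 0 < P) by apply Rpower_gt0.
  assert (Hah : m <= alpha * h) by nra.
  assert (Hach : alpha * c * h <= - (m / 2)) by nra.
  assert (Hrg : rho * g <= m / 4) by (pose proof (Rle_abs g); nra).
  nra.
Qed.

Lemma cos_le_neg_half th : PI - PI / 3 <= th <= PI + PI / 3 -> cos th <= - (1 / 2).
Proof.
  intros Hth; pose proof PI_RGT_0.
  replace th with ((th - PI) + PI) by ring; rewrite neg_cos.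
  assert (Habs : cos (th - PI) = cos (Rabs (th - PI))).
  { unfold Rabs; destruct (Rcase_abs (th - PI)); [rewrite cos_neg|]; reflexivity. }
  assert (Hu : Rabs (th - PI) <= PI / 3) by (apply Rabs_le; lra).
  rewrite Habs, <- cos_PI3.
  destruct (Req_dec (Rabs (th - PI)) (PI / 3)) as [E | E]; [rewrite E; lra|].
  enough (cos (PI / 3) < cos (Rabs (th - PI))) by lra.
  apply cos_decreasing_1; pose proof (Rabs_pos (th - PI)); lra.
Qed.

Lemma B_p_geometry alpha beta x1 x2 : B_p alpha (PI / 3) beta x1 x2 ->
  rpow beta (1 / alpha) <= norm2 x1 x2 <= 2 * rpow beta (1 / alpha) /\
  x1 <= - (norm2 x1 x2 / 2) /\ Rabs x1 <= norm2 x1 x2 /\ Rabs x2 <= norm2 x1 x2.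
Proof.
  intros [Hrho [th [Hth [Ex1 Ex2]]]].
  assert (Hn : 0 <= norm2 x1 x2) by apply sqrt_pos.
  pose proof (cos_le_neg_half th Hth); pose proof (COS_bound th); pose proof (SIN_bound th).
  set (rho := norm2 x1 x2) in *; clearbody rho; subst x1 x2.
  repeat split; try tauto; try (apply Rabs_le; split); nra.
Qed.

Lemma closure2_self (S : R -> R -> Prop) x y : S x y -> closure2 S x y.
Proof.
  intros H eps Heps; exists x, y; split; [exact H|].
  unfold dist2; replace ((x - x) ^ 2 + (y - y) ^ 2) with 0 by ring.
  rewrite sqrt_0; exact Heps.
Qed.

Lemma dist2_origin_lt a b r : Rabs a < r -> Rabs b < r -> dist2 0 0 a b < 2 * r.
Proof.
  intros Ha Hb; pose proof (Rabs_pos a); pose proof (Rabs_pos b).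
  unfold dist2; rewrite <- (sqrt_pow2 (2 * r)) by lra.
  apply sqrt_lt_1_alt; split; [nra|].
  replace ((0 - a) ^ 2) with (Rabs a ^ 2) by (rewrite pow2_abs; ring).
  replace ((0 - b) ^ 2) with (Rabs b ^ 2) by (rewrite pow2_abs; ring).
  nra.
Qed.

Lemma C1_pos_local_bounds (Om W : R -> R -> Prop) (h1 : R -> R -> R) :
  open2 Om -> Om 0 0 -> open2 W -> W 0 0 -> C1_closure W h1 ->
  (forall x1 x2, closure2 W x1 x2 -> 0 < h1 x1 x2) ->
  exists R0 m M, 0 < R0 /\ 0 < m /\ 0 < M /\
    forall a b, Rabs a < R0 -> Rabs b < R0 ->
      W a b /\ Om a b /\ m <= h1 a b /\ Rabs (pd1 h1 a b) <= M /\
      ex_derive (fun t => h1 t b) a.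
Proof.
  intros HOm HOm0 HW HW0 [Hc [Hd [g1 [g2 [Hg1 [_ Heq]]]]]] Hpos.
  pose proof (closure2_self W 0 0 HW0) as HW0'.
  destruct (HOm 0 0 HOm0) as [r1 [Hr1 H1]].
  destruct (HW 0 0 HW0) as [r2 [Hr2 H2]].
  assert (Hh0 : 0 < h1 0 0) by exact (Hpos 0 0 HW0').
  destruct (Hc 0 0 HW0' (h1 0 0 / 2)) as [r3 [Hr3 H3]]; [lra|].
  destruct (Hg1 0 0 HW0' 1) as [r4 [Hr4 H4]]; [lra|].
  set (r := Rmin (Rmin r1 r2) (Rmin r3 r4)).
  assert (Hr : 0 < r) by (repeat apply Rmin_glb_lt; assumption).
  exists (r / 2), (h1 0 0 / 2), (Rabs (g1 0 0) + 1).
  pose proof (Rabs_pos (g1 0 0)).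
  split; [lra|]; split; [lra|]; split; [lra|].
  intros a b Ha Hb.
  assert (Hab : dist2 0 0 a b < r) by (replace r with (2 * (r / 2)) by field; apply dist2_origin_lt; auto).
  pose proof (Rmin_l (Rmin r1 r2) (Rmin r3 r4)); pose proof (Rmin_r (Rmin r1 r2) (Rmin r3 r4)).
  pose proof (Rmin_l r1 r2); pose proof (Rmin_r r1 r2); pose proof (Rmin_l r3 r4); pose proof (Rmin_r r3 r4).
  assert (HWab : W a b) by (apply H2; unfold r in *; lra).
  pose proof (closure2_self W a b HWab) as HWab'.
  repeat split.
  - exact HWab.
  - apply H1; unfold r in *; lra.
  - assert (Hclose : Rabs (h1 a b - h1 0 0) < h1 0 0 / 2) by (apply H3; auto; unfold r in *; lra).
    apply Rabs_def2 in Hclose; lra.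
  - destruct (Heq a b HWab) as [-> _].
    assert (Hclose : Rabs (g1 a b - g1 0 0) < 1) by (apply H4; auto; unfold r in *; lra).
    pose proof (Rabs_triang_inv (g1 a b) (g1 0 0)); lra.
  - apply (Hd a b HWab).
Qed.

Section LocalEstimates.

Variables (Om W : R -> R -> Prop) (h0 h1 : R -> R -> R) (alpha R0 m M : R).
Hypotheses (Halpha : 1 <= alpha) (HR0 : 0 < R0) (Hm : 0 < m) (HM : 0 < M).
Hypothesis Hbox : forall a b, Rabs a < R0 -> Rabs b < R0 ->
  W a b /\ Om a b /\ m <= h1 a b /\ Rabs (pd1 h1 a b) <= M /\
  ex_derive (fun t => h1 t b) a.

Let s := Rmin (R0 / 2) (m / (4 * M)).

Lemma scale_pos : 0 < s.
Proof. apply Rmin_glb_lt; [lra | apply Rdiv_lt_0_compat; lra]. Qed.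

Lemma scale_le_R0 : s <= R0 / 2.
Proof. apply Rmin_l. Qed.

Lemma scale_mul_le : s * M <= m / 4.
Proof.
  apply Rle_trans with (m / (4 * M) * M); [apply Rmult_le_compat_r; [lra | apply Rmin_r]|].
  right; field; lra.
Qed.

Lemma rpow_root_le_scale beta : 0 < beta <= Rpower (s / 2) alpha ->
  2 * rpow beta (1 / alpha) <= s.
Proof.
  intros Hb; rewrite rpow_Rpower by lra.
  pose proof scale_pos; enough (Rpower beta (1 / alpha) <= s / 2) by lra.
  apply Rpower_inv_le; lra.
Qed.

Lemma pd1_caseI x1 x2 :
  (forall a b, W a b -> Om a b -> h0 a b = rpow (Rabs a) alpha * h1 a b) ->
  - R0 < x1 < 0 -> Rabs x2 < R0 ->
  pd1 h0 x1 x2 = alpha * Rpower (- x1) (alpha - 1) * (-1) * h1 x1 x2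
                 + Rpower (- x1) alpha * pd1 h1 x1 x2.
Proof.
  intros Hrep Hx1 Hx2.
  assert (Hloc : locally x1 (fun t => Rpower (- t) alpha * h1 t x2 = h0 t x2)).
  { apply (filter_imp (fun t => - R0 < t /\ t < 0)).
    - intros t Ht; destruct (Hbox t x2) as [HWt [HOmt _]]; [apply Rabs_def1; lra | exact Hx2|].
      rewrite Hrep by assumption; rewrite rpow_Rpower, Rabs_left by (try apply Rabs_pos_lt; lra).
      reflexivity.
    - apply (open_and _ _ (open_gt (- R0)) (open_lt 0)); exact Hx1. }
  rewrite (pd1_mul_local h0 h1 _ x1 x2 _ Hloc (is_derive_Rpower_opp x1 alpha (proj2 Hx1))).
  - ring.
  - apply Hbox; [apply Rabs_def1; lra | exact Hx2].
Qed.

Lemma caseI_estimate :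
  (forall a b, W a b -> Om a b -> h0 a b = rpow (Rabs a) alpha * h1 a b) ->
  exists delta beta0 c2, 0 < delta /\ 0 < beta0 /\ 0 < c2 /\
    forall beta, 0 < beta <= beta0 ->
    forall x1 x2, B_l alpha delta beta x1 x2 ->
      pd1 h0 x1 x2 <= - c2 * rpow beta (1 - 1 / alpha).
Proof.
  intros Hrep.
  exists R0, (Rpower (s / 2) alpha), (m / 4).
  split; [exact HR0|]; split; [apply Rpower_gt0|]; split; [lra|].
  intros beta Hb x1 x2 [Hx1 Hx2].
  pose proof (rpow_root_le_scale beta Hb); pose proof scale_le_R0; pose proof scale_mul_le.
  rewrite rpow_Rpower in * by lra.
  pose proof (Rpower_gt0 beta (1 / alpha)).
  assert (Hx2' : Rabs x2 < R0) by (apply Rabs_def1; lra).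
  destruct (Hbox x1 x2) as [_ [_ [Hh1 [Hg1 _]]]]; [apply Rabs_def1; lra | exact Hx2'|].
  rewrite (pd1_caseI x1 x2 Hrep) by lra.
  apply factor_derivative_le with (M := M); try lra.
  apply Rle_trans with (s * M); [apply Rmult_le_compat_r|]; lra.
Qed.

Lemma pd1_caseII x1 x2 :
  (forall a b, W a b -> Om a b -> h0 a b = rpow (norm2 a b) alpha * h1 a b) ->
  x1 <> 0 -> Rabs x1 < R0 -> Rabs x2 < R0 ->
  pd1 h0 x1 x2 = alpha * Rpower (norm2 x1 x2) (alpha - 1) * (x1 / norm2 x1 x2) * h1 x1 x2
                 + Rpower (norm2 x1 x2) alpha * pd1 h1 x1 x2.
Proof.
  intros Hrep Hx1 Hx1R Hx2.
  assert (Hloc : locally x1 (fun t => Rpower (norm2 t x2) alpha * h1 t x2 = h0 t x2)).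
  { apply (filter_imp (fun t => t <> 0 /\ - R0 < t /\ t < R0)).
    - intros t [Ht HtR]; destruct (Hbox t x2) as [HWt [HOmt _]];
        [apply Rabs_def1; lra | exact Hx2|].
      rewrite Hrep, rpow_Rpower by (try apply norm2_pos; assumption); reflexivity.
    - apply (open_and _ _ (open_neq 0) (open_and _ _ (open_gt (- R0)) (open_lt R0))).
      apply Rabs_def2 in Hx1R; repeat split; lra. }
  apply (pd1_mul_local h0 h1 _ x1 x2 _ Hloc (is_derive_Rpower_norm2 x1 x2 alpha Hx1)).
  apply Hbox; assumption.
Qed.

Lemma caseII_estimate :
  (forall a b, W a b -> Om a b -> h0 a b = rpow (norm2 a b) alpha * h1 a b) ->
  exists theta0 c2 beta0, 0 < theta0 < PI / 2 /\ 0 < c2 /\ 0 < beta0 /\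
    forall beta, 0 < beta <= beta0 ->
    forall x1 x2, B_p alpha theta0 beta x1 x2 ->
      pd1 h0 x1 x2 <= - c2 * rpow beta (1 - 1 / alpha).
Proof.
  intros Hrep; pose proof PI_RGT_0.
  exists (PI / 3), (m / 4), (Rpower (s / 2) alpha).
  split; [lra|]; split; [lra|]; split; [apply Rpower_gt0|].
  intros beta Hb x1 x2 HB.
  destruct (B_p_geometry alpha beta x1 x2 HB) as [Hrho [Hx1 [Hx1n Hx2n]]].
  pose proof (rpow_root_le_scale beta Hb); pose proof scale_le_R0; pose proof scale_mul_le.
  rewrite rpow_Rpower in * by lra.
  pose proof (Rpower_gt0 beta (1 / alpha)).
  destruct (Hbox x1 x2) as [_ [_ [Hh1 [Hg1 _]]]]; try lra.
  rewrite (pd1_caseII x1 x2 Hrep) by lra.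
  apply factor_derivative_le with (M := M); try lra.
  - apply Rmult_le_reg_r with (norm2 x1 x2); [lra|].
    unfold Rdiv; rewrite Rmult_assoc, Rinv_l, Rmult_1_r by lra; lra.
  - apply Rle_trans with (s * M); [apply Rmult_le_compat_r|]; lra.
Qed.

End LocalEstimates.

Theorem lemma3p3 (Om : R -> R -> Prop) (h0 : R -> R -> R) (alpha : R) :
  standing Om h0 ->
  (caseI Om h0 alpha ->
     exists delta beta0 c2, 0 < delta /\ 0 < beta0 /\ 0 < c2 /\
       forall beta, 0 < beta <= beta0 ->
       forall x1 x2, B_l alpha delta beta x1 x2 ->
         pd1 h0 x1 x2 <= - c2 * rpow beta (1 - 1 / alpha)) /\
  (caseII Om h0 alpha ->
     exists theta0 c2 beta0, 0 < theta0 < PI / 2 /\ 0 < c2 /\ 0 < beta0 /\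
       forall beta, 0 < beta <= beta0 ->
       forall x1 x2, B_p alpha theta0 beta x1 x2 ->
         pd1 h0 x1 x2 <= - c2 * rpow beta (1 - 1 / alpha)).
Proof.
  intros [HOm [_ [HOm0 _]]]; split.
  - intros [_ [_ [Halpha [W [h1 [HW [HW0 [HC [Hpos Hrep]]]]]]]]].
    destruct (C1_pos_local_bounds Om W h1 HOm HOm0 HW HW0 HC Hpos)
      as [R0 [m [M [HR0 [Hm [HM Hbox]]]]]].
    exact (caseI_estimate Om W h0 h1 alpha R0 m M Halpha HR0 Hm HM Hbox Hrep).
  - intros [_ [Halpha [W [h1 [HW [HW0 [HC [Hpos Hrep]]]]]]]].
    destruct (C1_pos_local_bounds Om W h1 HOm HOm0 HW HW0 HC Hpos)
      as [R0 [m [M [HR0 [Hm [HM Hbox]]]]]].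
    exact (caseII_estimate Om W h0 h1 alpha R0 m M Halpha HR0 Hm HM Hbox Hrep).
Qed.
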